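(* Let $(X,T)$ be a minimal topological dynamical system with $T$ a homeomorphism. If there are $x\ne y$ in $X$ such that $(x,y)$ is proximal for $T^{-1}$ and $\inf_{n\in\mathbb{Z}_+}d(T^nx,T^ny)>0$, then $(X,T)$ is strongly $\mathcal{F}_t$-sensitive.
   Context: A topological dynamical system: compact metric space $(X,d)$ with continuous surjection $T$; minimal means every orbit is dense. $(x,y)$ is proximal for $T^{-1}$ if $\inf_{n\ge0}d(T^{-n}x,T^{-n}y)=0$. $(X,T)$ is strongly $\mathcal{F}_t$-sensitive if there is $\delta>0$ such that for each nonempty open $U$ there are $x,y\in U$ with $\{n\in\mathbb{Z}_+:d(T^nx,T^ny)>\delta\}$ thick (containing arbitrarily long blocks of consecutive integers). *)

From HB Require Import structures.
From mathcomp Require Import all_boot all_order all_algebra.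
From mathcomp Require Import all_classical all_reals all_analysis.
Set Implicit Arguments. Unset Strict Implicit. Unset Printing Implicit Defensive.
Import Order.TTheory GRing.Theory Num.Theory.
Local Open Scope classical_set_scope.
Local Open Scope ring_scope.

Definition minimal_system {R : realType} (X : metricType R) (T : X -> X) : Prop :=
  forall x : X, closure (range (fun n : nat => iter n T x)) = [set: X].

Definition proximal_for {R : realType} (X : metricType R) (S : X -> X) (x y : X) : Prop :=
  forall e : R, 0 < e -> exists n : nat, mdist (iter n S x) (iter n S y) < e.

Definition thick (A : set nat) : Prop :=
  forall L : nat, exists m : nat, forall i : nat, (i < L)%N -> A (m + i)%N.

Definition strongly_Ft_sensitive {R : realType} (X : metricType R) (T : X -> X) : Prop :=
  exists delta : R, 0 < delta /\
    forall U : set X, open U -> U !=set0 ->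
      exists x y : X, U x /\ U y /\
        thick [set n : nat | delta < mdist (iter n T x) (iter n T y)].

From HB Require Import structures.
From mathcomp Require Import all_boot all_order all_algebra.
From mathcomp Require Import all_classical all_reals all_analysis.
Import Order.TTheory GRing.Theory Num.Theory.
Local Open Scope classical_set_scope.
Local Open Scope ring_scope.

(* Minimality and compactness give a Lebesgue number eta for the open cover
   of X by the preimages T^-j(U): every eta-ball is carried into U by a single
   iterate T^j.  Proximality for T^-1 yields n with d(T^-n x, T^-n y) < eta, so
   T^j T^-n x and T^j T^-n y both lie in U; from time n on their orbits are
   those of x and y, hence stay more than c/2 apart on a whole tail of times. *)

Lemma iter_can {X : Type} {f g : X -> X} (n : nat) :
  cancel f g -> cancel (iter n f) (iter n g).
Proof. by move=> fK; elim: n => [//|n IH] x; rewrite iterSr iterS fK IH. Qed.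

Lemma iter_subn_can {X : Type} {f g : X -> X} {n k : nat} (x : X) :
  cancel g f -> (n <= k)%N -> iter k f (iter n g x) = iter (k - n) f x.
Proof. by move=> gK nk; rewrite -(subnK nk) iterD addnK iter_can. Qed.

Lemma continuous_iter {T : topologicalType} {f : T -> T} (n : nat) :
  continuous f -> continuous (iter n f).
Proof.
move=> cf; elim: n => [|n IH] x /=; first exact: cvg_id.
exact: (continuous_comp (IH x) (cf _)).
Qed.

Lemma thick_from {A : set nat} (n : nat) :
  (forall m, (n <= m)%N -> A m) -> thick A.
Proof. by move=> An L; exists n => i _; apply: An; rewrite leq_addr. Qed.

Lemma lebesgue_number {R : realType} {X : metricType R} {I : Type}
    {V : I -> set X} :
  compact [set: X] -> (forall i, open (V i)) -> (forall w, exists i, V i w) ->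
  exists2 eta : R, 0 < eta & forall w, exists i, ball w eta `<=` V i.
Proof.
move=> cX oV Vcov.
pose P (e : R) (w : X) := exists i, ball w e `<=` V i.
have nearP w : [set: X] w -> \forall w' \near w & e \near (0 : R)^'+, P e w'.
  move=> _; have [i Viw] := Vcov w.
  have /nbhs_ballP[rho rho0 wV] : nbhs w (V i) by exact: open_nbhs_nbhs.
  have rho20 : 0 < rho / 2 by rewrite divr_gt0.
  exists (ball w (rho / 2), [set e | e < rho / 2]).
    by split; [apply: nbhsx_ballx | exact: nbhs_right_lt].
  move=> [w' e] /= [ww' erho]; exists i => b w'b.
  apply: wV; rewrite (splitr rho); apply: (ball_triangle ww').
  exact: (le_ball (ltW erho) w'b).
have [e [e0 allP]] := @filter_ex _ _ (at_right_proper_filter 0) _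
  (filterI (nbhs_right_gt 0) ((compact_near_coveringP _).1 cX R _ P _ nearP)).
by exists e => // w; exact: allP.
Qed.

Lemma minimal_orbit_meets_open {R : realType} {X : metricType R} {T : X -> X}
    {U : set X} :
  minimal_system T -> open U -> U !=set0 -> forall w, exists j, U (iter j T w).
Proof.
move=> minT oU [u Uu] w.
have /(_ U (open_nbhs_nbhs (conj oU Uu)))[_ [[j _ <-] Uwj]] :
  closure (range (fun n => iter n T w)) u by rewrite minT.
by exists j.
Qed.

Lemma minimal_uniform_return {R : realType} {X : metricType R} {T : X -> X}
    {U : set X} :
  compact [set: X] -> continuous T -> minimal_system T -> open U -> U !=set0 ->
  exists2 eta : R, 0 < eta & forall w, exists j, ball w eta `<=` iter j T @^-1` U.
Proof.
move=> cX cT minT oU U0; apply: lebesgue_number => // [j|].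
  by apply: open_comp => // w _; exact: continuous_iter.
exact: minimal_orbit_meets_open.
Qed.

Theorem proposition5p12 (R : realType) (X : metricType R) (T Tinv : X -> X) :
  compact [set: X] ->
  continuous T -> continuous Tinv ->
  cancel T Tinv -> cancel Tinv T ->
  minimal_system T ->
  (exists x y : X, x <> y /\ proximal_for Tinv x y /\
     exists c : R, 0 < c /\ forall n : nat, c <= mdist (iter n T x) (iter n T y)) ->
  strongly_Ft_sensitive T.
Proof.
move=> cX cT _ _ TinvK minT [x [y [_ [prox [c [c0 xy_ge_c]]]]]].
exists (c / 2); split=> [|U oU U0]; first by rewrite divr_gt0.
have [eta eta0 return_U] := minimal_uniform_return cX cT minT oU U0.
have [n xy_lt_eta] := prox eta eta0.
have [j ballU] := return_U (iter n Tinv x).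
exists (iter j T (iter n Tinv x)), (iter j T (iter n Tinv y)).
split; first exact/ballU/ballxx.
split; first by apply: ballU; rewrite ballEmdist.
apply: (thick_from n) => m nm /=.
have nmj : (n <= m + j)%N by rewrite (leq_trans nm) ?leq_addr.
rewrite -!iterD !(iter_subn_can _ TinvK nmj).
by apply: lt_le_trans (xy_ge_c _); rewrite ltr_pdivrMr // ltr_pMr // ltr1n.
Qed.
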